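(* Let $X$ be a well-ordered set and $DGDNP(X)$ the free differential GDN-Poisson algebra generated by $X$. Then the set of normal words forms a linear basis of $DGDNP(X)$. Moreover, $(DGDNP(X),\cdot,\circ)\cong(k\{X\},\cdot,\circ)$ as GDN-Poisson algebras, where $f\circ g=fDg$ in $k\{X\}$, and $(DGDNP(X),\cdot,\partial)\cong(k\{X\},\cdot,D)$ as commutative associative differential algebras, where $\partial(f)=e\circ f$ for $f\in DGDNP(X)$; in both cases the isomorphism is induced by $a\mapsto a$, $a\in X$.
   Context: A GDN-Poisson algebra is a vector space with bilinear products $\cdot,\circ$ such that $(\cdot)$ is commutative associative with unit $e$, $x\circ(y\circ z)-(x\circ y)\circ z=y\circ(x\circ z)-(y\circ x)\circ z$, $(x\circ y)\circ z=(x\circ z)\circ y$, $(x\cdot y)\circ z=x\cdot(y\circ z)$, $(x\circ y)\cdot z-x\circ(y\cdot z)=(y\circ x)\cdot z-y\circ(x\cdot z)$. It is a differential GDN-Poisson algebra if moreover $x\circ(y\cdot z)=(x\circ y)\cdot z+(x\circ z)\cdot y$ for all $x,y,z$. For $a\in X$ and $i\ge0$ let $[e\circ e\circ\cdots\circ a]_i=e\circ(e\circ(\cdots(e\circ a)\cdots))$ with $i$ copies of $e$. A normal word is $[e\circ\cdots\circ a_1]_{i_1}\cdot[e\circ\cdots\circ a_2]_{i_2}\cdots[e\circ\cdots\circ a_n]_{i_n}$ with $n\ge0$ (equal to $e$ if $n=0$), $a_t\in X$, and $(i_1,a_1)\ge\cdots\ge(i_n,a_n)$ lexicographically. $k\{X\}$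 is the free commutative associative differential algebra over the field $k$ generated by $X$, with unit $e$ and one derivation $D$ ($De=0$). *)

From HB Require Import structures.
From mathcomp Require Import all_boot all_order all_algebra.
Set Implicit Arguments.
Unset Strict Implicit.
Unset Printing Implicit Defensive.
Import Order.TTheory GRing.Theory.
Local Open Scope ring_scope.

Section Defs.
Variable k : fieldType.

Definition bilinear_op (V : lmodType k) (m : V -> V -> V) : Prop :=
  (forall (a : k) x y z, m (a *: x + y) z = a *: m x z + m y z) /\
  (forall (a : k) x y z, m x (a *: y + z) = a *: m x y + m x z).

Definition linear_map (V W : lmodType k) (f : V -> W) : Prop :=
  forall (a : k) x y, f (a *: x + y) = a *: f x + f y.

Definition is_GDNP (V : lmodType k) (dot circ : V -> V -> V) (e : V) : Prop :=
  bilinear_op dot /\ bilinear_op circ /\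
  (forall x y, dot x y = dot y x) /\
  (forall x y z, dot x (dot y z) = dot (dot x y) z) /\
  (forall x, dot e x = x /\ dot x e = x) /\
  (forall x y z, circ x (circ y z) - circ (circ x y) z
                 = circ y (circ x z) - circ (circ y x) z) /\
  (forall x y z, circ (circ x y) z = circ (circ x z) y) /\
  (forall x y z, circ (dot x y) z = dot x (circ y z)) /\
  (forall x y z, dot (circ x y) z - circ x (dot y z)
                 = dot (circ y x) z - circ y (dot x z)).

Definition is_DGDNP (V : lmodType k) (dot circ : V -> V -> V) (e : V) : Prop :=
  is_GDNP dot circ e /\
  (forall x y z, circ x (dot y z) = dot (circ x y) z + dot (circ x z) y).

Definition is_GDNP_hom (V W : lmodType k) (dotV circV : V -> V -> V) (eV : V)
  (dotW circW : W -> W -> W) (eW : W) (f : V -> W) : Prop :=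
  [/\ linear_map f, f eV = eW,
      (forall x y, f (dotV x y) = dotW (f x) (f y)) &
      (forall x y, f (circV x y) = circW (f x) (f y))].

Definition is_free_DGDNP (X : Type) (V : lmodType k) (dot circ : V -> V -> V)
  (e : V) (i : X -> V) : Prop :=
  is_DGDNP dot circ e /\
  forall (W : lmodType k) (dotW circW : W -> W -> W) (eW : W) (f : X -> W),
    is_DGDNP dotW circW eW ->
    exists phi : V -> W,
      (is_GDNP_hom dot circ e dotW circW eW phi /\ forall a, phi (i a) = f a) /\
      forall psi : V -> W,
        is_GDNP_hom dot circ e dotW circW eW psi -> (forall a, psi (i a) = f a) ->
        forall v, psi v = phi v.

Definition is_CDA (V : lmodType k) (dot : V -> V -> V) (e : V) (D : V -> V)
  : Prop :=
  bilinear_op dot /\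
  (forall x y, dot x y = dot y x) /\
  (forall x y z, dot x (dot y z) = dot (dot x y) z) /\
  (forall x, dot e x = x /\ dot x e = x) /\
  linear_map D /\
  (forall x y, D (dot x y) = dot (D x) y + dot x (D y)) /\
  D e = 0.

Definition is_CDA_hom (V W : lmodType k) (dotV : V -> V -> V) (eV : V)
  (DV : V -> V) (dotW : W -> W -> W) (eW : W) (DW : W -> W) (f : V -> W)
  : Prop :=
  [/\ linear_map f, f eV = eW,
      (forall x y, f (dotV x y) = dotW (f x) (f y)) &
      (forall x, f (DV x) = DW (f x))].

Definition is_free_CDA (X : Type) (V : lmodType k) (dot : V -> V -> V) (e : V)
  (D : V -> V) (i : X -> V) : Prop :=
  is_CDA dot e D /\
  forall (W : lmodType k) (dotW : W -> W -> W) (eW : W) (DW : W -> W)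
         (f : X -> W),
    is_CDA dotW eW DW ->
    exists phi : V -> W,
      (is_CDA_hom dot e D dotW eW DW phi /\ forall a, phi (i a) = f a) /\
      forall psi : V -> W,
        is_CDA_hom dot e D dotW eW DW psi -> (forall a, psi (i a) = f a) ->
        forall v, psi v = phi v.

Definition is_basis_on (I : eqType) (V : lmodType k) (P : pred I) (w : I -> V)
  : Prop :=
  (forall v : V, exists (S : seq I) (c : I -> k),
      all P S /\ v = \sum_(s <- S) c s *: w s) /\
  (forall (S : seq I) (c : I -> k), uniq S -> all P S ->
      \sum_(s <- S) c s *: w s = 0 -> forall s, s \in S -> c s = 0).

End Defs.

Section NormalWords.
Variables (d : Order.disp_t) (X : orderType d).

Definition lexge (p q : nat * X) : bool :=
  (q.1 < p.1)%N || ((p.1 == q.1) && (q.2 <= p.2)%O).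

(* index sequences of normal words: (i1,a1) >= ... >= (in,an) *)
Definition normal_index (s : seq (nat * X)) : bool := sorted lexge s.

Variables (k : fieldType) (V : lmodType k) (dot circ : V -> V -> V) (e : V)
  (i : X -> V).

Definition ebracket (p : nat * X) : V := iter p.1 (circ e) (i p.2).

Fixpoint normal_word (s : seq (nat * X)) : V :=
  match s with
  | [::] => e
  | [:: p] => ebracket p
  | p :: s' => dot (ebracket p) (normal_word s')
  end.

End NormalWords.

From HB Require Import structures.
From mathcomp Require Import all_boot all_order all_algebra.
From mathcomp Require Import mpoly boolp zify.
(* In a differential GDN-Poisson algebra x o y = x . (e o y), and e o _ is a derivation
   of the commutative product; conversely a commutative differential algebra (A, ., D)
   is a differential GDN-Poisson algebra for x o y = x . D y.  The two universal
   properties therefore give mutually inverse maps between the free objects.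
   Normal words span: their span contains e and the generators, and is closed under
   the product (a product of normal words is a normal word after sorting) and under o
   (by the Leibniz rule, e o _ sends a product of brackets to a sum of such products
   with one index raised), so by freeness it is everything.  They are independent:
   the free algebra maps to a polynomial ring with derivation x_(j,a) |-> x_(j+1,a),
   sending [e o ... o a]_j to x_(j,a) and distinct normal words to distinct monomials. *)

Set Implicit Arguments.
Unset Strict Implicit.
Unset Printing Implicit Defensive.
Import Order.TTheory GRing.Theory.
Local Open Scope ring_scope.

Section LinearMap.
Variables (k : fieldType) (U V : lmodType k) (f : U -> V).
Hypothesis lin_f : linear_map f.

Lemma linear_mapD : {morph f : x y / x + y}.
Proof. by move=> x y; have := lin_f 1 x y; rewrite !scale1r. Qed.

Lemma linear_map0 : f 0 = 0.
Proof. by apply: (@addrI _ (f 0)); rewrite -linear_mapD !addr0. Qed.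

Lemma linear_mapZ a x : f (a *: x) = a *: f x.
Proof. by have := lin_f a x 0; rewrite !addr0 linear_map0 addr0. Qed.

Lemma linear_map_sum (T : Type) (r : seq T) (F : T -> U) :
  f (\sum_(t <- r) F t) = \sum_(t <- r) f (F t).
Proof. exact: (big_morph f linear_mapD linear_map0). Qed.

End LinearMap.

Lemma linear_map_comp (k : fieldType) (U V W : lmodType k) (f : V -> W) (g : U -> V) :
  linear_map f -> linear_map g -> linear_map (f \o g).
Proof. by move=> lin_f lin_g a x y /=; rewrite lin_g lin_f. Qed.

Lemma bilinear_op_linl (k : fieldType) (V : lmodType k) (m : V -> V -> V) z :
  bilinear_op m -> linear_map (fun x => m x z).
Proof. by move=> bil_m a x y; apply: bil_m.1. Qed.

Lemma bilinear_op_linr (k : fieldType) (V : lmodType k) (m : V -> V -> V) x :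
  bilinear_op m -> linear_map (m x).
Proof. by move=> bil_m a y z; apply: bil_m.2. Qed.

Section DifferentialAlgebras.
Variables (k : fieldType) (V : lmodType k) (dot : V -> V -> V) (e : V).

Lemma GDNP_circE circ : is_GDNP dot circ e -> forall x y, circ x y = dot x (circ e y).
Proof.
by case=> _ [_ [_ [_ [dot1 [_ [_ [dot_circ _]]]]]]] x y; rewrite -dot_circ (dot1 x).2.
Qed.

Lemma CDA_of_DGDNP circ : is_DGDNP dot circ e -> is_CDA dot e (circ e).
Proof.
case=> [[bil_dot [bil_circ [dotC [dotA [dot1 _]]]]] leibniz].
do 4 split => //; split; first exact: bilinear_op_linr bil_circ.
split; first by move=> x y; rewrite leibniz (dotC (circ e y)).
(* Leibniz at e = e . e gives e o e = e o e + e o e. *)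
apply: (@addrI _ (circ e e)); rewrite addr0.
by have := leibniz e e e; rewrite (dot1 e).1 (dot1 (circ e e)).2.
Qed.

Lemma DGDNP_of_CDA D : is_CDA dot e D -> is_DGDNP dot (fun x y => dot x (D y)) e.
Proof.
case=> [bil [dotC [dotA [dot1 [lin_D [leibniz _]]]]]].
have dotDr x : {morph dot x : y z / y + z} := linear_mapD (bilinear_op_linr x bil).
have dotCA x y z : dot x (dot y z) = dot y (dot x z) by rewrite dotA (dotC x) -dotA.
split; last by move=> x y z; rewrite leibniz dotDr dotA -!dotA (dotC y).
split=> //; split.
  split=> a x y z; first exact: bil.1.
  by rewrite lin_D (bil.2 a x).
do 3 split => //; split.
  move=> x y z; rewrite !leibniz !dotDr !dotA addrAC subrr add0r.
  by rewrite addrAC subrr add0r -!dotA dotCA.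
split; first by move=> x y z; rewrite -!dotA (dotC (D y)).
split; first by move=> x y z; rewrite dotA.
move=> x y z; rewrite !leibniz !dotDr !opprD !addrA -!dotA !subrr !add0r.
by rewrite dotCA.
Qed.

End DifferentialAlgebras.

Section Homomorphisms.
Variables (k : fieldType) (U V W : lmodType k).

Lemma GDNP_hom_id (dot circ : U -> U -> U) e : is_GDNP_hom dot circ e dot circ e id.
Proof. by []. Qed.

Lemma CDA_hom_id (dot : U -> U -> U) e D : is_CDA_hom dot e D dot e D id.
Proof. by []. Qed.

Lemma GDNP_hom_comp (dotU circU : U -> U -> U) eU (dotV circV : V -> V -> V) eV
    (dotW circW : W -> W -> W) eW (f : V -> W) (g : U -> V) :
  is_GDNP_hom dotV circV eV dotW circW eW f ->
  is_GDNP_hom dotU circU eU dotV circV eV g ->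
  is_GDNP_hom dotU circU eU dotW circW eW (f \o g).
Proof.
case=> lin_f f1 f_dot f_circ [lin_g g1 g_dot g_circ]; split=> /=.
- exact: linear_map_comp.
- by rewrite g1 f1.
- by move=> x y; rewrite g_dot f_dot.
- by move=> x y; rewrite g_circ f_circ.
Qed.

Lemma CDA_hom_comp (dotU : U -> U -> U) eU DU (dotV : V -> V -> V) eV DV
    (dotW : W -> W -> W) eW DW (f : V -> W) (g : U -> V) :
  is_CDA_hom dotV eV DV dotW eW DW f -> is_CDA_hom dotU eU DU dotV eV DV g ->
  is_CDA_hom dotU eU DU dotW eW DW (f \o g).
Proof.
case=> lin_f f1 f_dot f_D [lin_g g1 g_dot g_D]; split=> /=.
- exact: linear_map_comp.
- by rewrite g1 f1.
- by move=> x y; rewrite g_dot f_dot.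
- by move=> x; rewrite g_D f_D.
Qed.

Lemma GDNP_hom_CDA_hom (dotU circU : U -> U -> U) eU (dotV : V -> V -> V) eV DV
    (f : U -> V) :
  is_CDA dotV eV DV ->
  is_GDNP_hom dotU circU eU dotV (fun x y => dotV x (DV y)) eV f ->
  is_CDA_hom dotU eU (circU eU) dotV eV DV f.
Proof.
case=> _ [_ [_ [dot1 _]]] [lin_f f1 f_dot f_circ]; split=> // x.
by rewrite f_circ f1 (dot1 _).1.
Qed.

Lemma CDA_hom_GDNP_hom (dotU : U -> U -> U) eU DU (dotV circV : V -> V -> V) eV
    (f : U -> V) :
  is_GDNP dotV circV eV ->
  is_CDA_hom dotU eU DU dotV eV (circV eV) f ->
  is_GDNP_hom dotU (fun x y => dotU x (DU y)) eU dotV circV eV f.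
Proof.
move=> GDNP_V [lin_f f1 f_dot f_D]; split=> // x y.
by rewrite f_dot f_D -GDNP_circE.
Qed.

End Homomorphisms.

Lemma free_DGDNP_endo_id (k : fieldType) (X : Type) (V : lmodType k)
    (dot circ : V -> V -> V) (e : V) (i : X -> V) (f : V -> V) :
  is_free_DGDNP dot circ e i -> is_GDNP_hom dot circ e dot circ e f ->
  (forall a, f (i a) = i a) -> forall v, f v = v.
Proof.
move=> [DGDNP_V univ] f_hom f_i v; have [g [_ g_unique]] := univ _ _ _ _ i DGDNP_V.
by rewrite (g_unique f f_hom f_i) -(g_unique id (GDNP_hom_id _ _ _) (fun=> erefl)).
Qed.

Lemma free_CDA_endo_id (k : fieldType) (X : Type) (V : lmodType k)
    (dot : V -> V -> V) (e : V) (D : V -> V) (i : X -> V) (f : V -> V) :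
  is_free_CDA dot e D i -> is_CDA_hom dot e D dot e D f ->
  (forall a, f (i a) = i a) -> forall v, f v = v.
Proof.
move=> [CDA_V univ] f_hom f_i v; have [g [_ g_unique]] := univ _ _ _ _ i CDA_V.
by rewrite (g_unique f f_hom f_i) -(g_unique id (CDA_hom_id _ _ _) (fun=> erefl)).
Qed.

Lemma free_DGDNP_CDA_iso (k : fieldType) (X : Type)
    (A : lmodType k) (dotA circA : A -> A -> A) (eA : A) (iA : X -> A)
    (B : lmodType k) (dotB : B -> B -> B) (eB : B) (DB : B -> B) (iB : X -> B) :
  is_free_DGDNP dotA circA eA iA -> is_free_CDA dotB eB DB iB ->
  exists phi : A -> B,
    [/\ bijective phi,
        is_GDNP_hom dotA circA eA dotB (fun x y => dotB x (DB y)) eB phi,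
        is_CDA_hom dotA eA (circA eA) dotB eB DB phi &
        forall a, phi (iA a) = iB a].
Proof.
move=> HA HB.
have [phi [[phi_GDNP phi_i] _]] := HA.2 _ _ _ _ iB (DGDNP_of_CDA HB.1).
have [psi [[psi_CDA psi_i] _]] := HB.2 _ _ _ _ iA (CDA_of_DGDNP HA.1).
have phi_CDA := GDNP_hom_CDA_hom HB.1 phi_GDNP.
have psi_GDNP := CDA_hom_GDNP_hom HA.1.1 psi_CDA.
exists phi; split=> //; exists psi.
- by apply: (free_DGDNP_endo_id HA (GDNP_hom_comp psi_GDNP phi_GDNP)) => a /=; rewrite phi_i.
- by apply: (free_CDA_endo_id HB (CDA_hom_comp phi_CDA psi_CDA)) => a /=; rewrite psi_i.
Qed.

Section SubAlgebra.
Variables (k : fieldType) (V : lmodType k) (dot circ : V -> V -> V) (e : V)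
  (P : {pred V}).
Hypotheses (P_submod : submod_closed P) (P_e : e \in P)
  (P_dot : forall x y, x \in P -> y \in P -> dot x y \in P)
  (P_circ : forall x y, x \in P -> y \in P -> circ x y \in P).

HB.instance Definition _ := GRing.isSubmodClosed.Build k V P P_submod.
Record subalg := SubAlg { subalg_val :> V; subalg_valP : subalg_val \in P }.
HB.instance Definition _ := [isSub for subalg_val].
HB.instance Definition _ := [Choice of subalg by <:].
HB.instance Definition _ := [SubChoice_isSubLmodule of subalg by <:].

Definition subalg_dot (x y : subalg) := SubAlg (P_dot (subalg_valP x) (subalg_valP y)).
Definition subalg_circ (x y : subalg) := SubAlg (P_circ (subalg_valP x) (subalg_valP y)).
Definition subalg_e := SubAlg P_e.

Lemma subalg_DGDNP : is_DGDNP dot circ e -> is_DGDNP subalg_dot subalg_circ subalg_e.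
Proof.
case=> [[[dotZl dotZr] [[circZl circZr] [dotC [dotA [dot1 axioms]]]]] leibniz].
case: axioms => [lsym [rcomm [dot_circ lpois]]].
do !split=> *; apply: val_inj; first [exact: dotZl | exact: dotZr | exact: circZl |
  exact: circZr | exact: dotC | exact: dotA | exact: (dot1 _).1 | exact: (dot1 _).2 |
  exact: lsym | exact: rcomm | exact: dot_circ | exact: lpois | exact: leibniz].
Qed.

Lemma subalg_full (X : Type) (i : X -> V) (P_i : forall a, i a \in P) :
  is_free_DGDNP dot circ e i -> forall v, v \in P.
Proof.
move=> HV.
have [f [[f_hom f_i] _]] := HV.2 _ _ _ _ (fun a => SubAlg (P_i a)) (subalg_DGDNP HV.1).
have val_hom : is_GDNP_hom subalg_dot subalg_circ subalg_e dot circ e subalg_val by [].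
move=> v; have <- : subalg_val (f v) = v.
  by apply: (free_DGDNP_endo_id HV (GDNP_hom_comp val_hom f_hom)) => a /=; rewrite f_i.
exact: subalg_valP.
Qed.

End SubAlgebra.

Lemma free_DGDNP_ind (k : fieldType) (X : Type) (V : lmodType k)
    (dot circ : V -> V -> V) (e : V) (i : X -> V) (Q : V -> Prop) :
  is_free_DGDNP dot circ e i ->
  Q 0 -> (forall a x y, Q x -> Q y -> Q (a *: x + y)) ->
  (forall x y, Q x -> Q y -> Q (dot x y)) -> (forall x y, Q x -> Q y -> Q (circ x y)) ->
  Q e -> (forall a, Q (i a)) -> forall v, Q v.
Proof.
move=> HV Q0 Q_lin Q_dot Q_circ Q_e Q_i v.
pose P : {pred V} := fun v => `[< Q v >].
have P_submod : submod_closed P.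
  by split=> [|a x y /asboolP Qx /asboolP Qy]; apply/asboolP; [|apply: Q_lin].
have P_e : e \in P by apply/asboolP.
have P_dot x y : x \in P -> y \in P -> dot x y \in P.
  by move=> /asboolP Qx /asboolP Qy; apply/asboolP; apply: Q_dot.
have P_circ x y : x \in P -> y \in P -> circ x y \in P.
  by move=> /asboolP Qx /asboolP Qy; apply/asboolP; apply: Q_circ.
have P_i a : i a \in P by apply/asboolP.
exact/asboolP/(subalg_full P_submod P_e P_dot P_circ P_i HV).
Qed.

Section Span.
Variables (k : fieldType) (I : eqType) (V : lmodType k) (P : pred I) (w : I -> V).

Definition spanned (v : V) : Prop :=
  exists L : seq (k * I), all (P \o snd) L /\ v = \sum_(p <- L) p.1 *: w p.2.

Lemma spanned0 : spanned 0.
Proof. by exists [::]; rewrite big_nil. Qed.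

Lemma spannedD x y : spanned x -> spanned y -> spanned (x + y).
Proof.
by move=> [L1 [P_L1 ->]] [L2 [P_L2 ->]]; exists (L1 ++ L2); rewrite all_cat P_L1 P_L2 big_cat.
Qed.

Lemma spannedZ a x : spanned x -> spanned (a *: x).
Proof.
move=> [L [P_L ->]]; exists [seq (a * p.1, p.2) | p <- L]; rewrite all_map big_map.
by split=> //; rewrite scaler_sumr; apply: eq_bigr => p _; rewrite scalerA.
Qed.

Lemma spanned_gen s : P s -> spanned (w s).
Proof. by move=> P_s; exists [:: (1, s)]; rewrite /= P_s big_seq1 scale1r. Qed.

Lemma spanned_sum (T : eqType) (r : seq T) (F : T -> V) :
  (forall t, t \in r -> spanned (F t)) -> spanned (\sum_(t <- r) F t).
Proof.
elim: r => [|t r IHr] F_r; first by rewrite big_nil; exact: spanned0.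
rewrite big_cons; apply: spannedD; first by apply: F_r; rewrite mem_head.
by apply: IHr => u u_r; apply: F_r; rewrite in_cons u_r orbT.
Qed.

Lemma spanned_linear (f : V -> V) : linear_map f ->
  (forall s, P s -> spanned (f (w s))) -> forall v, spanned v -> spanned (f v).
Proof.
move=> lin_f f_w v [L [P_L ->]]; rewrite (linear_map_sum lin_f).
apply: spanned_sum => p p_L; rewrite (linear_mapZ lin_f); apply/spannedZ/f_w.
exact: (allP P_L).
Qed.

Lemma spanned_combination v : spanned v ->
  exists (S : seq I) (c : I -> k), all P S /\ v = \sum_(s <- S) c s *: w s.
Proof.
suff merge L : all (P \o snd) L -> exists (S : seq I) (c : I -> k),
    [/\ uniq S, all P S & \sum_(p <- L) p.1 *: w p.2 = \sum_(s <- S) c s *: w s].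
  by move=> [L [/merge [S [c [_ P_S ->]]] ->]]; exists S, c.
elim: L => [|[a s] L IHL] /=; first by exists [::], (fun=> 0); rewrite !big_nil.
move=> /andP[P_s /IHL [S [c [uniq_S P_S sum_L]]]]; rewrite big_cons /= sum_L.
have [s_S | s_notin_S] := boolP (s \in S).
  exists S, (fun t => c t + (if t == s then a else 0)); split=> //.
  under [RHS]eq_bigr do rewrite scalerDl.
  rewrite big_split /= addrC; congr (_ + _).
  rewrite (bigD1_seq s) //= eqxx big1 ?addr0 // => t /negbTE->.
  exact: scale0r.
exists (s :: S), (fun t => if t == s then a else c t); rewrite /= s_notin_S P_s.
split=> //; rewrite big_cons eqxx; congr (_ + _); apply: eq_big_seq => t t_S.
by case: eqP t_S => // ->; rewrite (negbTE s_notin_S).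
Qed.

End Span.

Section LexicographicOrder.
Variables (d : Order.disp_t) (X : orderType d).

Lemma lexge_total : total (@lexge d X).
Proof. by move=> [i a] [j b]; rewrite /lexge /=; case: ltngtP => //= _; exact: le_total. Qed.

Lemma lexge_trans : transitive (@lexge d X).
Proof.
move=> [j b] [i a] [l c]; rewrite /lexge /=.
move=> /orP[lt_ji|/andP[/eqP eq_ij le_ba]] /orP[lt_lj|/andP[/eqP eq_jl le_cb]]; apply/orP.
- by left; apply: ltn_trans lt_ji.
- by left; rewrite -eq_jl.
- by left; rewrite eq_ij.
- by right; rewrite eq_ij eq_jl eqxx (le_trans le_cb le_ba).
Qed.

Lemma lexge_anti : antisymmetric (@lexge d X).
Proof.
move=> [i a] [j b]; rewrite /lexge /=.
case: ltngtP => //= -> le_ab.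
by rewrite (le_anti le_ab).
Qed.

Lemma normal_index_sort (s : seq (nat * X)) : normal_index (sort (@lexge d X) s).
Proof. exact: sort_sorted lexge_total s. Qed.

End LexicographicOrder.

Section NormalWords.
Variables (d : Order.disp_t) (X : orderType d) (k : fieldType) (A : lmodType k)
  (dot circ : A -> A -> A) (e : A) (i : X -> A).
Hypothesis DGDNP_A : is_DGDNP dot circ e.

Local Notation w := (normal_word dot circ e i).
Local Notation eb := (ebracket circ e i).
Local Notation normal_spanned := (spanned (normal_index (X:=X)) w).

Let bil_dot : bilinear_op dot := DGDNP_A.1.1.
Let bil_circ : bilinear_op circ := DGDNP_A.1.2.1.
Let dotC : forall x y, dot x y = dot y x := DGDNP_A.1.2.2.1.
Let dotA : forall x y z, dot x (dot y z) = dot (dot x y) z := DGDNP_A.1.2.2.2.1.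
Let dot1 : forall x, dot e x = x /\ dot x e = x := DGDNP_A.1.2.2.2.2.1.

Lemma normal_word_cons p s : w (p :: s) = dot (eb p) (w s).
Proof. by case: s => //=; rewrite (dot1 _).2. Qed.

Lemma normal_word_cat s t : w (s ++ t) = dot (w s) (w t).
Proof.
elim: s => [|p s IHs]; first by rewrite (dot1 _).1.
by rewrite !normal_word_cons IHs dotA.
Qed.

Lemma normal_word_perm s t : perm_eq s t -> w s = w t.
Proof.
elim: s t => [|p s IHs] t; first by rewrite perm_sym => /perm_nilP->.
move=> perm_st; have p_t : p \in t by rewrite -(perm_mem perm_st) mem_head.
move: perm_st; case/splitPr: p_t => t1 t2 perm_st.
have perm_s : perm_eq s (t1 ++ t2).
  by rewrite -(perm_cons p) (perm_trans perm_st) // -cat1s perm_catCA.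
rewrite normal_word_cons (IHs _ perm_s) !normal_word_cat normal_word_cons.
by rewrite dotA (dotC (eb p)) -dotA.
Qed.

Lemma spanned_normal_word s : normal_spanned (w s).
Proof.
rewrite (@normal_word_perm s (sort (@lexge d X) s)) 1?perm_sym ?perm_sort //.
exact/spanned_gen/normal_index_sort.
Qed.

Lemma circ_e_normal_word_cons p s :
  circ e (w (p :: s)) = dot (w [:: (p.1.+1, p.2)]) (w s) + dot (w [:: p]) (circ e (w s)).
Proof. by rewrite normal_word_cons DGDNP_A.2 (dotC (circ e (w s))). Qed.

Lemma spanned_normal_dot x y :
  normal_spanned x -> normal_spanned y -> normal_spanned (dot x y).
Proof.
move=> span_x span_y; apply: (spanned_linear (bilinear_op_linl y bil_dot)) span_x => s _ /=.
apply: (spanned_linear (bilinear_op_linr (w s) bil_dot)) span_y => t _.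
by rewrite -normal_word_cat; exact: spanned_normal_word.
Qed.

Lemma spanned_normal_circ_e s : normal_spanned (circ e (w s)).
Proof.
elim: s => [|p s IHs]; first by rewrite (CDA_of_DGDNP DGDNP_A).2.2.2.2.2.2; exact: spanned0.
by rewrite circ_e_normal_word_cons;
  apply: spannedD; apply: spanned_normal_dot => //; apply: spanned_normal_word.
Qed.

Lemma spanned_normal_circ x y :
  normal_spanned x -> normal_spanned y -> normal_spanned (circ x y).
Proof.
move=> span_x span_y; rewrite (GDNP_circE DGDNP_A.1); apply: spanned_normal_dot => //.
apply: (spanned_linear (bilinear_op_linr e bil_circ)) span_y => s _.
exact: spanned_normal_circ_e.
Qed.

End NormalWords.

Lemma normal_words_spanning (d : Order.disp_t) (X : orderType d) (k : fieldType)
    (A : lmodType k) (dot circ : A -> A -> A) (e : A) (i : X -> A) (v : A) :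
  is_free_DGDNP dot circ e i ->
  exists (S : seq (seq (nat * X))) (c : seq (nat * X) -> k),
    all (normal_index (X:=X)) S /\ v = \sum_(s <- S) c s *: normal_word dot circ e i s.
Proof.
move=> HA; apply: spanned_combination; move: v.
apply: (free_DGDNP_ind HA) => [|a x y span_x span_y||||a].
- exact: spanned0.
- exact/spannedD/span_y/spannedZ.
- exact: spanned_normal_dot i HA.1.
- exact: spanned_normal_circ i HA.1.
- exact: (spanned_normal_word i HA.1 [::]).
- exact: (spanned_normal_word i HA.1 [:: (0%N, a)]).
Qed.

Section ShiftDerivation.
Variables (k : fieldType) (n m : nat).
Local Notation W := {mpoly k[n.+1]}.

(* There is no variable x_(j+m) when j + m > n, so x_j is then sent to 0; the model is
   only used on variables whose shift stays in range. *)
Definition shift_var (j : 'I_n.+1) : W :=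
  if (j + m <= n)%N then 'X_(inord (j + m)) else 0.

Definition shift_deriv (q : W) : W := \sum_(j < n.+1) q^`M(j) * shift_var j.

Lemma shift_deriv_CDA : is_CDA *%R 1 shift_deriv.
Proof.
split; first by split=> a x y z; rewrite ?mulrDl ?mulrDr -?scalerAl -?scalerAr.
split; first exact: mulrC.
split; first exact: mulrA.
split; first by move=> x; rewrite mul1r mulr1.
split.
  move=> a x y; rewrite /shift_deriv scaler_sumr -big_split; apply: eq_bigr => j _.
  by rewrite mderivD mderivZ mulrDl scalerAl.
split.
  move=> x y; rewrite /shift_deriv mulr_suml mulr_sumr -big_split; apply: eq_bigr => j _.
  by rewrite mderivM mulrDl mulrAC mulrA.
by rewrite /shift_deriv big1 // => j _; rewrite -mpolyC1 mderivC mul0r.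
Qed.

Lemma shift_derivX (j : 'I_n.+1) : shift_deriv 'X_j = shift_var j.
Proof.
rewrite /shift_deriv (bigD1 j) //= big1 ?addr0 => [|l /negbTE l_neq_j].
  rewrite mderivX mnm1E eqxx scale1r.
  have -> : (U_(j) - U_(j))%MM = 0%MM by apply/mnmP => l; rewrite mnmBE subnn mnm0E.
  by rewrite mpolyX0 mul1r.
by rewrite mderivX mnm1E eq_sym l_neq_j scale0r mul0r.
Qed.

End ShiftDerivation.

Section PolynomialModel.
Variables (d : Order.disp_t) (X : orderType d) (k : fieldType) (L : seq X) (N : nat).
Local Notation n := (N.+1 * size L)%N.
Local Notation W := {mpoly k[n.+1]}.

Definition in_box (p : nat * X) : bool := (p.1 <= N)%N && (p.2 \in L).

(* The variable x_(j,a), image of [e o ... o a]_j, is numbered j * |L| + (index of a in L). *)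
Definition var_index (p : nat * X) : nat := (p.1 * size L + index p.2 L)%N.

Definition var_of (p : nat * X) : 'I_n.+1 := inord (var_index p).

Lemma var_index_le p : in_box p -> (var_index p <= n)%N.
Proof.
case/andP => le_p1N; rewrite -index_mem /var_index mulSn addnC => lt_idx.
exact: leq_add (ltnW lt_idx) (leq_mul le_p1N (leqnn _)).
Qed.

Lemma var_ofE p : in_box p -> var_of p = var_index p :> nat.
Proof. by move=> box_p; rewrite inordK // ltnS var_index_le. Qed.

Lemma var_of_inj : {in in_box &, injective var_of}.
Proof.
move=> [j a] [l b] box_p box_q /(congr1 val); rewrite /= !var_ofE // /var_index /=.
case/andP: box_p box_q => _ /= a_L /andP[_ /= b_L] eq_idx.
have lt_a : (index a L < size L)%N by rewrite index_mem.
have lt_b : (index b L < size L)%N by rewrite index_mem.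
have pos_L : (0 < size L)%N by case: (L) a_L.
have eq_jl : j = l.
  by have := congr1 (divn^~ (size L)) eq_idx; rewrite !divnMDl // !divn_small // !addn0.
have := congr1 (modn^~ (size L)) eq_idx; rewrite !modnMDl !modn_small // => eq_ab.
by rewrite eq_jl -(nth_index a a_L) -(nth_index a b_L) eq_ab.
Qed.

Fixpoint monomial_of (s : seq (nat * X)) : 'X_{1..n.+1} :=
  if s is p :: s' then (U_(var_of p) + monomial_of s')%MM else 0%MM.

Lemma monomial_ofE s (v : 'I_n.+1) : monomial_of s v = count (fun p => var_of p == v) s.
Proof. by elim: s => [|p s IHs] /=; rewrite ?mnm0E // mnmDE mnm1E IHs. Qed.

Lemma monomial_of_inj s t : normal_index s -> normal_index t ->
  all in_box s -> all in_box t -> monomial_of s = monomial_of t -> s = t.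
Proof.
move=> normal_s normal_t box_s box_t eq_st.
apply: (sorted_eq (@lexge_trans d X) (@lexge_anti d X)) => //; apply/allP => p st_p /=.
have box_p : in_box p.
  by move: st_p; rewrite mem_cat => /orP[]; [apply: (allP box_s) | apply: (allP box_t)].
have count_var u : all in_box u -> count_mem p u = count (fun q => var_of q == var_of p) u.
  move=> box_u; apply: eq_in_count => q u_q /=.
  by apply/eqP/eqP => [->|/(var_of_inj (allP box_u q u_q) box_p)].
by rewrite (count_var _ box_s) (count_var _ box_t) -!monomial_ofE eq_st.
Qed.

Lemma shift_var_of p : in_box (p.1.+1, p.2) ->
  @shift_var k n (size L) (var_of p) = 'X_(var_of (p.1.+1, p.2)).
Proof.
case: p => j a box_Sp; have box_p : in_box (j, a).
  by case/andP: box_Sp => /ltnW le_jN a_L; apply/andP.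
rewrite /shift_var var_ofE // (_ : var_index (j, a) + size L = var_index (j.+1, a))%N.
  by rewrite var_index_le.
by rewrite /var_index /= mulSn; lia.
Qed.

Variables (A : lmodType k) (dot circ : A -> A -> A) (e : A) (i : X -> A) (phi : A -> W).
Hypotheses (DGDNP_A : is_DGDNP dot circ e)
  (phi_hom : is_GDNP_hom dot circ e *%R (fun f g => f * @shift_deriv k n (size L) g) 1 phi)
  (phi_i : forall a, phi (i a) = 'X_(var_of (0%N, a))).

Lemma phi_ebracket p : in_box p -> phi (ebracket circ e i p) = 'X_(var_of p).
Proof.
case: p => j a; elim: j => [|j IHj] box_p; first exact: phi_i.
have box_j : in_box (j, a) by case/andP: box_p => /ltnW le_jN a_L; apply/andP.
case: phi_hom => _ phi1 _ phi_circ.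
by rewrite /ebracket /= phi_circ phi1 mul1r IHj // shift_derivX shift_var_of.
Qed.

Lemma phi_normal_word s :
  all in_box s -> phi (normal_word dot circ e i s) = 'X_[monomial_of s].
Proof.
case: phi_hom => _ phi1 phi_dot _; elim: s => [|p s IHs]; first by rewrite phi1 mpolyX0.
case/andP=> box_p box_s.
by rewrite (normal_word_cons i DGDNP_A) phi_dot phi_ebracket // IHs // mpolyXD.
Qed.

End PolynomialModel.

Lemma normal_words_independent (d : Order.disp_t) (X : orderType d) (k : fieldType)
    (A : lmodType k) (dot circ : A -> A -> A) (e : A) (i : X -> A)
    (S : seq (seq (nat * X))) (c : seq (nat * X) -> k) :
  is_free_DGDNP dot circ e i -> uniq S -> all (normal_index (X:=X)) S ->
  \sum_(s <- S) c s *: normal_word dot circ e i s = 0 -> forall s, s \in S -> c s = 0.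
Proof.
move=> HA uniq_S normal_S sum0 s0 S_s0.
pose L := [seq p.2 | p <- flatten S]; pose N := \max_(p <- flatten S) p.1.
have box_S s : s \in S -> all (in_box L N) s.
  move=> S_s; apply/allP => p s_p; have S_p : p \in flatten S by apply/flattenP; exists s.
  rewrite /in_box (map_f snd S_p) andbT.
  exact: (@leq_bigmax_seq _ _ xpredT (fun q => q.1) p S_p).
pose n := (N.+1 * size L)%N.
have [phi [[phi_hom phi_i] _]] := HA.2 _ _ _ _ (fun a => 'X_(var_of L N (0%N, a)))
  (DGDNP_of_CDA (shift_deriv_CDA k n (size L))).
have lin_phi : linear_map phi by case: phi_hom.
pose m0 := monomial_of L N s0.
have /(congr1 (mcoeff m0)) := congr1 phi sum0.
rewrite (linear_map0 lin_phi) (linear_map_sum lin_phi) mcoeff0.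
rewrite (big_morph (mcoeff m0) (mcoeffD m0) (mcoeff0 _ m0)) big_seq.
under eq_bigr => s S_s do rewrite (linear_mapZ lin_phi)
  (phi_normal_word HA.1 phi_hom phi_i (box_S s S_s)) mcoeffZ mcoeffX.
rewrite -big_seq (bigD1_seq s0) //= eqxx mulr1 big1_seq ?addr0 // => s /andP[s_neq_s0 S_s].
case: eqP => [eq_m|]; last by rewrite mulr0.
have normal_in t : t \in S -> normal_index t := allP normal_S t.
case/negP: s_neq_s0; apply/eqP.
exact: monomial_of_inj (normal_in s S_s) (normal_in s0 S_s0) (box_S s S_s)
  (box_S s0 S_s0) eq_m.
Qed.

Theorem mainTheorem6 (k : fieldType) (d : Order.disp_t) (X : orderType d)
  (wfX : well_founded (fun x y : X => (x < y)%O))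
  (A : lmodType k) (dotA circA : A -> A -> A) (eA : A) (iA : X -> A)
  (HA : is_free_DGDNP dotA circA eA iA)
  (B : lmodType k) (dotB : B -> B -> B) (eB : B) (DB : B -> B) (iB : X -> B)
  (HB : is_free_CDA dotB eB DB iB) :
  [/\ is_basis_on (normal_index (X:=X)) (normal_word dotA circA eA iA),
      is_GDNP dotB (fun f g => dotB f (DB g)) eB,
      (exists phi : A -> B,
         [/\ bijective phi,
             is_GDNP_hom dotA circA eA dotB (fun f g => dotB f (DB g)) eB phi &
             forall a, phi (iA a) = iB a]) &
      (exists psi : A -> B,
         [/\ bijective psi,
             is_CDA_hom dotA eA (circA eA) dotB eB DB psi &
             forall a, psi (iA a) = iB a])].
Proof.
have [phi [bij_phi phi_GDNP phi_CDA phi_i]] := free_DGDNP_CDA_iso HA HB.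
split.
- by split=> [v|S c]; [exact: normal_words_spanning | exact: normal_words_independent].
- exact: (DGDNP_of_CDA HB.1).1.
- by exists phi.
- by exists phi.
Qed.
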